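(* Let $R$ be a ring and $\mathcal{X}$ a class of left $R$-modules. Suppose every left $R$-module $M$ has an injective (monic) $\mathcal{X}$-injective preenvelope $\phi: M \to E$ (i.e. $E$ is an $\mathcal{X}$-injective module and $\phi$ is a preenvelope with respect to the class of $\mathcal{X}$-injective modules) with $\mathrm{coker}\,\phi \in \mathcal{X}$. Then every bounded complex of left $R$-modules has a $C(\mathcal{X}\text{-injective})$-preenvelope.
   Context: A left $R$-module $E$ is $\mathcal{X}$-injective if $\mathrm{Ext}^1_R(N, E) = 0$ for all $N \in \mathcal{X}$. $C(\mathcal{X}\text{-injective})$ denotes the class of complexes all of whose terms are $\mathcal{X}$-injective modules. For a class $\mathcal{F}$ of objects in an abelian category, a morphism $\phi: M \to F$ with $F \in \mathcal{F}$ is an $\mathcal{F}$-preenvelope of $M$ if every morphism $f: M \to F'$ with $F' \in \mathcal{F}$ factors as $f = g\phi$ for some $g: F \to F'$. A complex is bounded if only finitely many of its terms are nonzero. *)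

From HB Require Import structures.
From mathcomp Require Import all_boot all_order all_algebra.
Set Implicit Arguments. Unset Strict Implicit. Unset Printing Implicit Defensive.
Import Order.TTheory GRing.Theory Num.Theory.
Local Open Scope ring_scope.

Section Defs.
Variable R : pzRingType.

(* Yoneda description of Ext^1_R(N, E) = 0: every extension
   0 -> E -i-> Y -p-> N -> 0 of left R-modules splits. *)
Definition Ext1_zero (N E : lmodType R) : Prop :=
  forall (Y : lmodType R) (i : {linear E -> Y}) (p : {linear Y -> N}),
    injective i -> (forall n : N, exists y, p y = n) ->
    (forall y, p y = 0 <-> exists e, y = i e) ->
    exists r : {linear Y -> E}, forall e, r (i e) = e.

Definition Xinjective (X : lmodType R -> Prop) (E : lmodType R) : Prop :=
  forall N : lmodType R, X N -> Ext1_zero N E.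

Definition mod_preenvelope (F : lmodType R -> Prop) (M E : lmodType R)
    (phi : {linear M -> E}) : Prop :=
  F E /\ forall (E' : lmodType R) (f : {linear M -> E'}), F E' ->
    exists g : {linear E -> E'}, forall m, g (phi m) = f m.

Definition is_coker (M E Q : lmodType R) (phi : {linear M -> E})
    (pi : {linear E -> Q}) : Prop :=
  (forall q : Q, exists e, pi e = q) /\ forall e, pi e = 0 <-> exists m, e = phi m.

Record complex := Complex {
  cobj : int -> lmodType R;
  cdif : forall n : int, {linear cobj n -> cobj (n + 1)};
  cdd : forall (n : int) (x : cobj n), cdif (n + 1) (cdif n x) = 0 }.

Definition chain_map (C D : complex)
    (f : forall n : int, {linear cobj C n -> cobj D n}) : Prop :=
  forall (n : int) (x : cobj C n), f (n + 1) (cdif C n x) = cdif D n (f n x).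

Definition bounded_complex (C : complex) : Prop :=
  exists a b : int, forall n : int, (n < a \/ b < n) -> forall x : cobj C n, x = 0.

Definition C_Xinjective (X : lmodType R -> Prop) (E : complex) : Prop :=
  forall n : int, Xinjective X (cobj E n).

Definition complex_preenvelope (G : complex -> Prop) (C E : complex)
    (phi : forall n : int, {linear cobj C n -> cobj E n}) : Prop :=
  chain_map phi /\ G E /\
  forall (E' : complex) (f : forall n : int, {linear cobj C n -> cobj E' n}),
    chain_map f -> G E' ->
    exists g : forall n : int, {linear cobj E n -> cobj E' n},
      chain_map g /\ forall (n : int) (x : cobj C n), g n (phi n x) = f n x.

Definition has_complex_preenvelope (G : complex -> Prop) (C : complex) : Prop :=
  exists (E : complex) (phi : forall n : int, {linear cobj C n -> cobj E n}),
    complex_preenvelope G phi.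

End Defs.

(* Put D^n = 0 below the support of C and, going up, D^(n+1) := E(P) where E(-) is an
   F-preenvelope and P = (D^n (+) C^(n+1)) / {(phi c + d z, - d_C c)} is the pushout of phi^n
   and d_C^n, further divided by the image of d^(n-1) so that d d = 0.  A chain map
   f : C -> E' into a complex of modules in F factors step by step: if g^n : D^n -> E'^n
   satisfies g^n phi^n = f^n and d_E' g^n d^(n-1) = 0, then (y, c) |-> d_E' g^n y + f^(n+1) c
   vanishes on the relations, so it factors through P and then through E(P) because E'^(n+1)
   is in F. *)

From HB Require Import structures.
From mathcomp Require Import all_boot all_order all_algebra.
From mathcomp Require Import zify boolp.
Set Implicit Arguments. Unset Strict Implicit. Unset Printing Implicit Defensive.
Import Order.TTheory GRing.Theory Num.Theory.
Local Open Scope ring_scope.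
Local Open Scope quotient_scope.

Section IntRecursion.
Variables (P : int -> Type) (b : int).
Variables (base : forall n, n <= b -> P n) (step : forall n, b <= n -> P n -> P (n + 1)).

Fixpoint offset (k : nat) : int := if k is k'.+1 then offset k' + 1 else b.

Lemma offsetE k : offset k = b + k%:Z.
Proof. by elim: k => [|k /= ->]; [rewrite addr0 | lia]. Qed.

Lemma offset_ge k : b <= offset k.
Proof. rewrite offsetE; lia. Qed.

Fixpoint rec_offset (k : nat) : P (offset k) :=
  match k as k0 return P (offset k0) with
  | 0%N => base (lexx b)
  | k'.+1 => step (offset_ge k') (rec_offset k')
  end.

Definition dist_from (n : int) : nat := `|n - b|%N.

Lemma offset_dist n : b <= n -> offset (dist_from n) = n.
Proof. rewrite offsetE /dist_from; lia. Qed.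

Lemma dist_from_succ n : b <= n -> dist_from (n + 1) = (dist_from n).+1.
Proof. rewrite /dist_from; lia. Qed.

Lemma le_of_not_ge n : (b <= n) = false -> n <= b.
Proof. lia. Qed.

Definition int_rec_from (n : int) : P n :=
  match sumbool_of_bool (b <= n) with
  | left h => eq_rect _ P (rec_offset (dist_from n)) n (offset_dist h)
  | right h => base (le_of_not_ge h)
  end.

Lemma int_rec_from_succ n (h : b <= n) : step h (int_rec_from n) = int_rec_from (n + 1).
Proof.
rewrite /int_rec_from; case: sumbool_of_bool => hn; last by have := h; rewrite hn.
case: sumbool_of_bool => hn1; last by have := hn1; lia.
move: (offset_dist hn1) (offset_dist hn); rewrite (dist_from_succ hn).
move: (dist_from n) => k e' e; move: h e'; clear hn hn1; case: n / e => h e'.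
by rewrite (eq_irrelevance e' erefl) (bool_irrelevance h (offset_ge k)).
Qed.

Lemma int_rec_from_ind (Q : forall n, P n -> Prop) :
    (forall n (h : n <= b), Q n (base h)) ->
    (forall n (h : b <= n) x, Q n x -> Q (n + 1) (step h x)) ->
  forall n, Q n (int_rec_from n).
Proof.
move=> Qbase Qstep n; rewrite /int_rec_from; case: sumbool_of_bool => h //.
move: (offset_dist h); move: (dist_from n) => k e; clear h; case: n / e.
by elim: k => [|k IHk] //=; apply: Qstep.
Qed.

End IntRecursion.

Section Cokernel.
Variables (R : pzRingType) (U V : lmodType R) (f : {linear U -> V}).

Definition image_mem : {pred V} := fun v => `[< exists u, v = f u >].

Lemma image_memP v : reflect (exists u, v = f u) (v \in image_mem).
Proof. exact: asboolP. Qed.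

Lemma image_mem_zmod_closed : zmod_closed image_mem.
Proof.
split=> [|_ _ /image_memP[u ->] /image_memP[w ->]]; apply/image_memP.
  by exists 0; rewrite linear0.
by exists (u - w); rewrite linearB.
Qed.

HB.instance Definition _ := GRing.isZmodClosed.Build V image_mem image_mem_zmod_closed.

Definition coker := Quotient.quot image_mem.
HB.instance Definition _ := GRing.Zmodule.on coker.

Lemma eqmod_image v w : (v == w %[mod coker]) = (v - w \in image_mem).
Proof. by rewrite Quotient.idealrBE. Qed.

Definition coker_scale (a : R) (q : coker) : coker := \pi_coker (a *: repr q).

Lemma pi_scale a : {morph \pi_coker : v / a *: v >-> coker_scale a v}.
Proof.
move=> v; apply/eqP; rewrite eqmod_image -scalerBr.
have /image_memP[u ->] : v - repr (\pi_coker v) \in image_mem.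
  by rewrite -eqmod_image reprK.
by apply/image_memP; exists (a *: u); rewrite linearZ.
Qed.
Canonical pi_scale_morph a := PiMorph1 (pi_scale a).

Lemma coker_scaleA a b q : coker_scale a (coker_scale b q) = coker_scale (a * b) q.
Proof. by rewrite -[q]reprK !piE scalerA. Qed.
Lemma coker_scale1 : left_id 1 coker_scale.
Proof. by move=> q; rewrite -[q]reprK !piE scale1r. Qed.
Lemma coker_scaleDr : right_distributive coker_scale +%R.
Proof. by move=> a q r; rewrite -[q]reprK -[r]reprK !piE scalerDr. Qed.
Lemma coker_scaleDl q : {morph coker_scale^~ q : a b / a + b}.
Proof. by move=> a b; rewrite -[q]reprK !piE scalerDl. Qed.

HB.instance Definition _ := GRing.Zmodule_isLmodule.Build R coker
  coker_scaleA coker_scale1 coker_scaleDr coker_scaleDl.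

Definition coker_pi (v : V) : coker := \pi_coker v.

Lemma coker_pi_is_linear : linear coker_pi.
Proof. by move=> a v w; rewrite /coker_pi !piE. Qed.
HB.instance Definition _ := GRing.isLinear.Build R V coker _ coker_pi coker_pi_is_linear.

Lemma coker_piE u : coker_pi (f u) = 0.
Proof.
rewrite -(linear0 coker_pi); apply/eqP; rewrite /coker_pi eqquotE Quotient.equivE subr0.
by apply/image_memP; exists u.
Qed.

Section Lift.
Variables (M : lmodType R) (g : {linear V -> M}).

(* The hypothesis is an argument only so that [coker_lift gf] can carry a canonical
   linear structure. *)
Definition coker_lift of (forall u, g (f u) = 0) := fun q : coker => g (repr q).

Hypothesis gf : forall u, g (f u) = 0.

Lemma coker_liftE v : coker_lift gf (coker_pi v) = g v.
Proof.
apply/eqP; rewrite -subr_eq0 /coker_lift -linearB.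
have /image_memP[u ->] : repr (coker_pi v) - v \in image_mem by rewrite -eqmod_image reprK.
by rewrite gf.
Qed.

Lemma coker_lift_is_linear : linear (coker_lift gf).
Proof.
by move=> a q r; rewrite -[q]reprK -[r]reprK -!/(coker_pi _) -linearP !coker_liftE linearP.
Qed.
HB.instance Definition _ :=
  GRing.isLinear.Build R coker M _ (coker_lift gf) coker_lift_is_linear.
End Lift.
End Cokernel.

Section BoundedBelowPreenvelope.
Variables (R : pzRingType) (F : lmodType R -> Prop).
Hypothesis has_preenvelope :
  forall M : lmodType R, exists (E : lmodType R) (phi : {linear M -> E}), mod_preenvelope F phi.
Hypothesis F_zero : F 'rV[R]_0.
Variables (C : complex R) (b : int).
Hypothesis C_vanish : forall n, n <= b -> forall x : cobj C n, x = 0.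

Let env (M : lmodType R) : lmodType R := proj1_sig (cid (has_preenvelope M)).
Let env_map (M : lmodType R) : {linear M -> env M} :=
  proj1_sig (cid (proj2_sig (cid (has_preenvelope M)))).
Let env_map_preenvelope (M : lmodType R) : mod_preenvelope F (env_map M) :=
  proj2_sig (cid (proj2_sig (cid (has_preenvelope M)))).

Record stage (n : int) := Stage {
  term : lmodType R;
  term_phi : {linear cobj C n -> term};
  prev : lmodType R;
  prev_dif : {linear prev -> term} }.

Definition zero_stage n : stage n := @Stage n 'rV[R]_0 \0 'rV[R]_0 \0.

Section NextStage.
Variables (n : int) (s : stage n).

(* [glued s] is the module P above, with [prev_dif s] in the role of d^(n-1). *)
Definition glue (p : cobj C n * prev s) : term s * cobj C (n + 1) :=
  (term_phi s p.1 + prev_dif s p.2, - cdif C n p.1).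

Lemma glue_is_linear : linear glue.
Proof.
move=> a p q; rewrite /glue /= !linearP; congr pair => /=.
by rewrite scalerDr addrACA.
Qed.
HB.instance Definition _ := GRing.isLinear.Build R _ _ _ glue glue_is_linear.

Definition glued := coker glue.

Definition next_phi (c : cobj C (n + 1)) : env glued := env_map glued (coker_pi glue (0, c)).
Definition next_dif (y : term s) : env glued := env_map glued (coker_pi glue (y, 0)).

Lemma next_phi_is_linear : linear next_phi.
Proof.
move=> a c c'; rewrite /next_phi -!linearP; congr (env_map _ (coker_pi _ _)).
by congr pair; rewrite /= ?scaler0 ?addr0.
Qed.
HB.instance Definition _ := GRing.isLinear.Build R _ _ _ next_phi next_phi_is_linear.

Lemma next_dif_is_linear : linear next_dif.
Proof.
move=> a y y'; rewrite /next_dif -!linearP; congr (env_map _ (coker_pi _ _)).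
by congr pair; rewrite /= ?scaler0 ?addr0.
Qed.
HB.instance Definition _ := GRing.isLinear.Build R _ _ _ next_dif next_dif_is_linear.

Definition next_stage : stage (n + 1) := Stage next_phi next_dif.

Lemma next_phi_dif x : next_phi (cdif C n x) = next_dif (term_phi s x).
Proof.
apply/eqP; rewrite -subr_eq0 /next_phi /next_dif -!linearB /=.
have -> : ((0, cdif C n x) - (term_phi s x, 0) : term s * cobj C (n + 1)) = glue (- x, 0).
  by rewrite /glue /= !linearN linear0 addr0 opprK; congr pair; rewrite /= ?sub0r ?subr0.
by rewrite (coker_piE glue) linear0.
Qed.

Lemma next_dif_prev z : next_dif (prev_dif s z) = 0.
Proof.
have glue_prev : glue (0, z) = (prev_dif s z, 0).
  by rewrite /glue /= !linear0 add0r; congr pair; rewrite /= oppr0.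
by rewrite /next_dif -glue_prev (coker_piE glue) linear0.
Qed.

End NextStage.
Arguments next_dif {n} s.

Definition stage_at : forall n, stage n :=
  @int_rec_from stage b (fun n _ => zero_stage n) (fun n _ s => next_stage s).

Lemma stage_at_succ n (h : b <= n) : next_stage (stage_at n) = stage_at (n + 1).
Proof. exact: int_rec_from_succ. Qed.

(* [stage_at (n + 1)] is [next_stage (stage_at n)] only propositionally, so maps out of
   [next_stage s] are transported along an equation [e]. *)
Section Transport.
Variables (n : int) (s : stage n).

Definition dif_along (t : stage (n + 1)) (e : next_stage s = t) : {linear term s -> term t} :=
  eq_rect (next_stage s) (fun t => {linear term s -> term t}) (next_dif s : {linear _ -> _}) t e.

Lemma dif_along_phi t (e : next_stage s = t) x :
  term_phi t (cdif C n x) = dif_along e (term_phi s x).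
Proof. by case: t / e; apply: next_phi_dif. Qed.

End Transport.

Lemma dif_along_dif n (s : stage n) t (e : next_stage s = t) u (e' : next_stage t = u) y :
  dif_along e' (dif_along e y) = 0.
Proof. by case: t / e u e' => u; case: u /; apply: next_dif_prev. Qed.

Definition preenv_dif n : {linear term (stage_at n) -> term (stage_at (n + 1))} :=
  match sumbool_of_bool (b <= n) with
  | left h => dif_along (stage_at_succ h)
  | right _ => \0
  end.

Lemma preenv_difE n (h : b <= n) y : preenv_dif n y = dif_along (stage_at_succ h) y.
Proof.
rewrite /preenv_dif; case: sumbool_of_bool => h'; last by have := h; rewrite h'.
by rewrite (bool_irrelevance h' h).
Qed.

Lemma preenv_dif_below n : (b <= n) = false -> forall y, preenv_dif n y = 0.
Proof.
move=> hn y; rewrite /preenv_dif; case: sumbool_of_bool => h //.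
by have := h; rewrite hn.
Qed.

Lemma preenv_dif_dif n y : preenv_dif (n + 1) (preenv_dif n y) = 0.
Proof.
case: (boolP (b <= n)) => [h | /negbTE hn]; last by rewrite (preenv_dif_below hn) linear0.
have h1 : b <= n + 1 by lia.
by rewrite (preenv_difE h) (preenv_difE h1) dif_along_dif.
Qed.

Definition preenv : complex R := Complex preenv_dif_dif.

Definition preenv_phi n : {linear cobj C n -> cobj preenv n} := term_phi (stage_at n).

Lemma preenv_phi_chain : chain_map preenv_phi.
Proof.
move=> n x; case: (boolP (b <= n)) => [h | /negbTE hn].
  by rewrite /= (preenv_difE h); apply: dif_along_phi.
by rewrite /= (preenv_dif_below hn) (C_vanish _ x) ?linear0 //; lia.
Qed.

Lemma preenv_termwise n : F (cobj preenv n).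
Proof.
apply: (@int_rec_from_ind stage b _ _ (fun n s => F (term s))) => [m _ | m _ s _] //=.
exact: (env_map_preenvelope _).1.
Qed.

Section Factorization.
Variables (E : complex R) (f : forall n, {linear cobj C n -> cobj E n}).
Hypotheses (f_chain : chain_map f) (E_termwise : forall n, F (cobj E n)).

Definition extends n (s : stage n) (g : {linear term s -> cobj E n}) : Prop :=
  (forall c, g (term_phi s c) = f n c) /\ (forall z, cdif E n (g (prev_dif s z)) = 0).

Definition extension n (s : stage n) := {g : {linear term s -> cobj E n} | extends g}.

Lemma zero_extends n (s : stage n) : n <= b -> extends (\0 : {linear term s -> cobj E n}).
Proof.
move=> hn; split=> [c|z] /=; last exact: linear0.
by rewrite (C_vanish hn c) linear0.
Qed.

Section NextExtension.
Variables (n : int) (s : stage n) (g : extension s).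

Definition glue_image (p : term s * cobj C (n + 1)) : cobj E (n + 1) :=
  cdif E n (sval g p.1) + f (n + 1) p.2.

Lemma glue_image_is_linear : linear glue_image.
Proof. by move=> a p q; rewrite /glue_image /= !linearP scalerDr addrACA. Qed.
HB.instance Definition _ := GRing.isLinear.Build R _ _ _ glue_image glue_image_is_linear.

Lemma glue_image_glue p : glue_image (glue p) = 0.
Proof.
have [g_phi g_prev] := proj2_sig g.
by rewrite /glue_image /= !linearD g_prev addr0 g_phi linearN f_chain subrr.
Qed.

Definition next_ext_map : {linear env (glued s) -> cobj E (n + 1)} :=
  sval (cid ((env_map_preenvelope (glued s)).2 _ (coker_lift glue_image_glue) (E_termwise _))).

Lemma next_ext_map_env q : next_ext_map (env_map _ q) = coker_lift glue_image_glue q.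
Proof. by rewrite /next_ext_map; case: cid. Qed.

Lemma next_ext_map_dif y : next_ext_map (next_dif s y) = cdif E n (sval g y).
Proof. by rewrite /next_dif next_ext_map_env coker_liftE /= /glue_image /= linear0 addr0. Qed.

Lemma next_ext_map_extends : extends (next_ext_map : {linear term (next_stage s) -> _}).
Proof.
split=> [c|y] /=.
  by rewrite /next_phi next_ext_map_env coker_liftE /= /glue_image /= raddf0 linear0 add0r.
by rewrite next_ext_map_dif cdd.
Qed.

Definition next_extension : extension (next_stage s) := exist _ _ next_ext_map_extends.

End NextExtension.

Lemma next_extension_along n (s : stage n) t (e : next_stage s = t) (g : extension s) y :
  sval (eq_rect _ (@extension _) (next_extension g) t e) (dif_along e y) = cdif E n (sval g y).
Proof. by case: t / e; apply: next_ext_map_dif. Qed.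

Definition zero_extension n (hn : n <= b) : extension (stage_at n) :=
  exist _ _ (zero_extends (stage_at n) hn).

Definition succ_extension n (h : b <= n) (g : extension (stage_at n)) :
    extension (stage_at (n + 1)) :=
  eq_rect _ (@extension _) (next_extension g) _ (stage_at_succ h).

Definition extension_at : forall n, extension (stage_at n) :=
  int_rec_from zero_extension succ_extension.

Definition preenv_factor n : {linear cobj preenv n -> cobj E n} := sval (extension_at n).

Lemma preenv_factor_phi n x : preenv_factor n (preenv_phi n x) = f n x.
Proof. exact: (proj2_sig (extension_at n)).1. Qed.

Lemma preenv_factor_below n : n < b -> forall y, preenv_factor n y = 0.
Proof.
move: n; apply: (int_rec_from_ind
  (Q := fun n (g : extension (stage_at n)) => n < b -> forall y, sval g y = 0)) => //.
by move=> m h g _ hm; exfalso; lia.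
Qed.

Lemma preenv_factor_chain : chain_map preenv_factor.
Proof.
move=> n y; case: (boolP (b <= n)) => [h | /negbTE hn].
  rewrite /= (preenv_difE h) /preenv_factor /extension_at.
  by rewrite -(int_rec_from_succ zero_extension succ_extension h) next_extension_along.
rewrite /= (preenv_dif_below hn) linear0 preenv_factor_below ?linear0 //; lia.
Qed.

End Factorization.

Theorem bounded_below_preenvelope :
  complex_preenvelope (fun E => forall n, F (cobj E n)) preenv_phi.
Proof.
split; first exact: preenv_phi_chain.
split; first exact: preenv_termwise.
move=> E f f_chain E_termwise; exists (preenv_factor f_chain E_termwise).
by split; [apply: preenv_factor_chain | apply: preenv_factor_phi].
Qed.

End BoundedBelowPreenvelope.

Lemma Ext1_zero_trivial (R : pzRingType) (N E : lmodType R) :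
  (forall e : E, e = 0) -> Ext1_zero N E.
Proof. by move=> E0 Y i p _ _ _; exists \0 => e; apply/esym/E0. Qed.

Theorem lemma2p24 (R : pzRingType) (X : lmodType R -> Prop) :
  (forall M : lmodType R,
     exists (E : lmodType R) (phi : {linear M -> E})
            (Q : lmodType R) (pi : {linear E -> Q}),
       mod_preenvelope (Xinjective X) phi /\ injective phi /\
       is_coker phi pi /\ X Q) ->
  forall C : complex R, bounded_complex C ->
    has_complex_preenvelope (C_Xinjective X) C.
Proof.
move=> envelopes C [a [? C_vanish]].
have has_preenvelope (M : lmodType R) :
    exists (E : lmodType R) (phi : {linear M -> E}), mod_preenvelope (Xinjective X) phi.
  by have [E [phi [_ [_ [phiP _]]]]] := envelopes M; exists E, phi.
have zero_Xinjective : Xinjective X 'rV[R]_0.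
  by move=> N _; apply: Ext1_zero_trivial; apply: thinmx0.
have C_below n : n <= a - 1 -> forall x : cobj C n, x = 0.
  by move=> hn x; apply: C_vanish; left; lia.
by do 2 eexists; apply: (bounded_below_preenvelope has_preenvelope zero_Xinjective C_below).
Qed.
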